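(* Let $H$ be a connected graph, $G_n$ a graph, $p_n\in(0,1)$, and $$\beta_H(p_n)=\sum_{K=1}^{|V(H)|}p_n^{2|V(H)|-K}\sum_{A\subset V(G_n):|A|=K}t_H(A)^2.$$ Then $$\frac{(1-p_n)\beta_H(p_n)}{2^{|V(H)|}-1}\le\mathrm{Var}[T(H,G_n)]\le\beta_H(p_n).$$
   Context: $G_n$ is a simple labeled graph on $V(G_n)=\{1,\dots,|V(G_n)|\}$ with adjacency $(a_{ij})$; $H=(V(H),E(H))$ with $|Aut(H)|$ automorphisms. $V(G_n)_k$ is the set of $k$-tuples of distinct vertices, $\bar{\mathbf s}$ the set of entries. $M_H(\mathbf s)=\prod_{(i,j)\in E(H)}a_{s_is_j}$, $t_H(A)=\frac1{|Aut(H)|}\sum_{\mathbf s\in V(G_n)_{|V(H)|}:\bar{\mathbf s}\supseteq A}M_H(\mathbf s)$. $\{X_v\}$ i.i.d. Bernoulli$(p_n)$, $X_{\mathbf s}=\prod_uX_{s_u}$, $T(H,G_n)=\frac1{|Aut(H)|}\sum_{\mathbf s}M_H(\mathbf s)X_{\mathbf s}$. *)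

From HB Require Import structures.
From mathcomp Require Import all_boot all_order all_algebra all_fingroup.
Set Implicit Arguments. Unset Strict Implicit. Unset Printing Implicit Defensive.
Import Order.TTheory GRing.Theory Num.Theory.
Local Open Scope ring_scope.

Definition simple_graph (T : finType) (e : rel T) : Prop :=
  symmetric e /\ irreflexive e.

Definition connected_graph (T : finType) (e : rel T) : Prop :=
  forall x y : T, connect e x y.

Definition autH (h : nat) (eH : rel 'I_h) : nat :=
  #|[set s : {perm 'I_h} | [forall i, forall j, eH (s i) (s j) == eH i j]]|.

Definition M_H (R : nzRingType) (h N : nat) (eH : rel 'I_h) (eG : rel 'I_N)
  (s : {ffun 'I_h -> 'I_N}) : R :=
  \prod_(i : 'I_h) \prod_(j : 'I_h | (i < j)%N && eH i j) (eG (s i) (s j))%:R.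

(* t_H(A) : s ranges over |V(H)|-tuples of distinct vertices (injective maps)
   whose set of entries contains A. *)
Definition t_H (R : fieldType) (h N : nat) (eH : rel 'I_h) (eG : rel 'I_N)
  (A : {set 'I_N}) : R :=
  (autH eH)%:R^-1 *
  \sum_(s : {ffun 'I_h -> 'I_N} | injectiveb s && (A \subset [set s i | i : 'I_h]))
     M_H R eH eG s.

Definition bern_prob (R : nzRingType) (N : nat) (p : R)
  (x : {ffun 'I_N -> bool}) : R :=
  \prod_(v : 'I_N) (if x v then p else 1 - p).

Definition expect (R : nzRingType) (N : nat) (p : R)
  (f : {ffun 'I_N -> bool} -> R) : R :=
  \sum_(x : {ffun 'I_N -> bool}) bern_prob p x * f x.

Definition variance (R : nzRingType) (N : nat) (p : R)
  (f : {ffun 'I_N -> bool} -> R) : R :=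
  expect p (fun x => f x ^+ 2) - (expect p f) ^+ 2.

Definition X_s (R : nzRingType) (h N : nat) (s : {ffun 'I_h -> 'I_N})
  (x : {ffun 'I_N -> bool}) : R :=
  \prod_(u : 'I_h) (x (s u))%:R.

Definition T_HG (R : fieldType) (h N : nat) (eH : rel 'I_h) (eG : rel 'I_N)
  (x : {ffun 'I_N -> bool}) : R :=
  (autH eH)%:R^-1 *
  \sum_(s : {ffun 'I_h -> 'I_N} | injectiveb s) M_H R eH eG s * X_s R s x.

Definition beta_H (R : fieldType) (h N : nat) (eH : rel 'I_h) (eG : rel 'I_N)
  (p : R) : R :=
  \sum_(1 <= K < h.+1)
     p ^+ (2 * h - K) * \sum_(A : {set 'I_N} | #|A| == K) (t_H R eH eG A) ^+ 2.

(* Write T = sum_s c_s 1[S_s \subset X], over the injective copies s of H with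
   vertex images S_s, where X is the random set of selected vertices, so that
   E 1[S \subset X] = p^|S|.  With k = |S_s :&: S_s'| this gives
   Var T = sum_(s,s') c_s c_s' p^(2h-k) (1 - p^k), while squaring t_H(A) gives
   beta_H = sum_(s,s') c_s c_s' sum_(A nonempty, A \subset S_s :&: S_s') p^(2h-|A|).
   Both bounds hold term by term: the inner sum of beta_H lies between its top
   term p^(2h-k) and (2^k - 1) p^(2h-k), and 1 - p <= 1 - p^k <= 1 when k >= 1. *)

From HB Require Import structures.
From mathcomp Require Import all_boot all_order all_algebra all_fingroup.
Import Order.TTheory GRing.Theory Num.Theory.
Set Implicit Arguments. Unset Strict Implicit. Unset Printing Implicit Defensive.
Local Open Scope ring_scope.

Section BernoulliSelection.
Variables (R : comNzRingType) (N : nat) (p : R).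
Local Notation selection := {ffun 'I_N -> bool}.

Definition all_selected (S : {set 'I_N}) (x : selection) : R :=
  (S \subset [set v | x v])%:R.

Lemma all_selectedE S x : all_selected S x = \prod_(v in S) (x v)%:R.
Proof.
rewrite /all_selected.
case: (boolP (S \subset _)) => [/subsetP selS | /subsetPn [v vS]].
  by rewrite big1 // => v /selS; rewrite inE => ->.
by rewrite inE => /negbTE xv; rewrite (bigD1 v) //= xv mul0r.
Qed.

Lemma all_selectedU S S' x :
  all_selected S x * all_selected S' x = all_selected (S :|: S') x.
Proof. by rewrite /all_selected -natrM mulnb subUset. Qed.

Lemma eq_expect (f g : selection -> R) : f =1 g -> expect p f = expect p g.
Proof. by move=> fg; apply: eq_bigr => x _; rewrite fg. Qed.

Lemma expect_sum (I : finType) (P : pred I) (F : I -> selection -> R) :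
  expect p (fun x => \sum_(i | P i) F i x) = \sum_(i | P i) expect p (F i).
Proof. by rewrite /expect; under eq_bigr do rewrite mulr_sumr; exact: exchange_big. Qed.

Lemma expectZ (a : R) (f : selection -> R) :
  expect p (fun x => a * f x) = a * expect p f.
Proof. by rewrite /expect mulr_sumr; apply: eq_bigr => x _; rewrite mulrCA. Qed.

(* Distributing the product over vertices: each v in S contributes p, every
   other vertex p + (1 - p) = 1. *)
Lemma expect_all_selected S : expect p (all_selected S) = p ^+ #|S|.
Proof.
rewrite /expect.
under eq_bigr => x _ do
  rewrite all_selectedE /bern_prob (big_mkcond (fun v => v \in S)) -big_split /=.
rewrite -(bigA_distr_bigA (fun v b =>
  (if b then p else 1 - p) * (if v \in S then (b%:R : R) else 1))).
under eq_bigr => v _ do rewrite big_bool /=.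
rewrite -prodr_const [RHS]big_mkcond /=; apply: eq_bigr => v _.
by case: (v \in S); rewrite ?mulr1 ?mulr0 ?addr0 // addrC subrK.
Qed.

Lemma eq_variance (f g : selection -> R) : f =1 g -> variance p f = variance p g.
Proof.
move=> fg; rewrite /variance (eq_expect fg).
by rewrite (eq_expect (g := fun x => g x ^+ 2)) // => x; rewrite fg.
Qed.

Lemma variance_all_selected_sum (I : finType) (P : pred I) (c : I -> R)
    (S : I -> {set 'I_N}) :
  variance p (fun x => \sum_(i | P i) c i * all_selected (S i) x) =
  \sum_(i | P i) \sum_(j | P j)
     c i * c j * (p ^+ #|S i :|: S j| - p ^+ #|S i| * p ^+ #|S j|).
Proof.
have second_moment :
    expect p (fun x => (\sum_(i | P i) c i * all_selected (S i) x) ^+ 2)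
    = \sum_(i | P i) \sum_(j | P j) c i * c j * p ^+ #|S i :|: S j|.
  rewrite (eq_expect (g := fun x => \sum_(i | P i) \sum_(j | P j)
      c i * c j * all_selected (S i :|: S j) x)); last first.
    move=> x; rewrite expr2 big_distrlr; apply: eq_bigr => i _; apply: eq_bigr => j _.
    by rewrite -all_selectedU mulrACA.
  rewrite expect_sum; apply: eq_bigr => i _; rewrite expect_sum; apply: eq_bigr => j _.
  by rewrite expectZ expect_all_selected.
have first_moment : expect p (fun x => \sum_(i | P i) c i * all_selected (S i) x)
    = \sum_(i | P i) c i * p ^+ #|S i|.
  by rewrite expect_sum; apply: eq_bigr => i _; rewrite expectZ expect_all_selected.
rewrite /variance second_moment first_moment expr2 big_distrlr -sumrB.
apply: eq_bigr => i _; rewrite -sumrB; apply: eq_bigr => j _.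
by rewrite mulrBr mulrACA.
Qed.

End BernoulliSelection.

Lemma sum_card_range_subset (V : nmodType) (T : finType) (n : nat) (C : {set T})
    (F : {set T} -> V) :
  (#|C| <= n)%N ->
  \sum_(1 <= K < n.+1) \sum_(A : {set T} | (#|A| == K) && (A \subset C)) F A =
  \sum_(A : {set T} | (A != set0) && (A \subset C)) F A.
Proof.
move=> leCn; rewrite (exchange_big_dep (fun A : {set T} => A \subset C)) /=; last first.
  by move=> K A _ /andP[].
rewrite [RHS]big_mkcondl; apply: eq_bigr => A AC.
rewrite (eq_bigl (fun K => K == #|A|)); last by move=> K; rewrite AC andbT eq_sym.
by rewrite big_nat1_eq ltnS card_gt0 (leq_trans (subset_leq_card AC) leCn) andbT.
Qed.

Section SubsetWeight.
Variables (R : realFieldType) (T : finType) (p : R).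
Hypotheses (p_ge0 : 0 <= p) (p_le1 : p <= 1).

Definition subset_weight (n : nat) (C : {set T}) : R :=
  \sum_(A : {set T} | (A != set0) && (A \subset C)) p ^+ (n - #|A|).

Lemma subset_weight_set0 n : subset_weight n set0 = 0.
Proof. by rewrite /subset_weight big_pred0 // => A; rewrite subset0 andNb. Qed.

Lemma subset_weight_ge n C : C != set0 -> p ^+ (n - #|C|) <= subset_weight n C.
Proof.
move=> C0; rewrite /subset_weight (bigD1 C) ?C0 ?subxx //=.
by rewrite lerDl sumr_ge0 // => A _; rewrite exprn_ge0.
Qed.

Lemma subset_weight_le n C :
  subset_weight n C <= (2 ^+ #|C| - 1) * p ^+ (n - #|C|).
Proof.
have card_nonempty : #|powerset C :\ set0| = (2 ^ #|C| - 1)%N.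
  have := cardsD1 set0 (powerset C).
  by rewrite powersetE sub0set card_powerset add1n => ->; rewrite subn1.
rewrite /subset_weight (eq_bigl (fun A => A \in powerset C :\ set0)); last first.
  by move=> A; rewrite in_setD1 powersetE.
apply: le_trans (_ : \sum_(A in powerset C :\ set0) p ^+ (n - #|C|) <= _).
  apply: ler_sum => A; rewrite in_setD1 powersetE => /andP[_ AC].
  by rewrite ler_wiXn2l // leq_sub2l // subset_leq_card.
rewrite sumr_const card_nonempty -[X in X <= _]mulr_natl.
by rewrite natrB ?expn_gt0 // natrX.
Qed.

Lemma overlap_gapE h k : (k <= h)%N ->
  p ^+ (2 * h - k) - p ^+ h * p ^+ h = p ^+ (2 * h - k) * (1 - p ^+ k).
Proof.
move=> le_kh; rewrite mulrBr mulr1 -!exprD subnK ?mul2n ?addnn //.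
by rewrite -addnn (leq_trans le_kh) ?leq_addr.
Qed.

Lemma overlap_gap_le_subset_weight h (C : {set T}) : (#|C| <= h)%N ->
  p ^+ (2 * h - #|C|) - p ^+ h * p ^+ h <= subset_weight (2 * h) C.
Proof.
move=> le_Ch; have [-> | C0] := eqVneq C set0.
  by rewrite subset_weight_set0 cards0 subn0 -exprD mul2n addnn subrr.
apply: le_trans (subset_weight_ge _ C0).
by rewrite overlap_gapE // ler_piMr ?exprn_ge0 // lerBlDr lerDl exprn_ge0.
Qed.

Lemma subset_weight_le_overlap_gap h (C : {set T}) : (#|C| <= h)%N ->
  (1 - p) * subset_weight (2 * h) C / (2 ^+ h - 1) <=
  p ^+ (2 * h - #|C|) - p ^+ h * p ^+ h.
Proof.
move=> le_Ch; have [-> | C0] := eqVneq C set0.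
  by rewrite subset_weight_set0 cards0 subn0 -exprD mul2n addnn subrr mulr0 mul0r.
have C_gt0 : (0 < #|C|)%N by rewrite card_gt0.
have two_pow_ge1 m : 1 <= 2 ^+ m :> R by rewrite exprn_ege1 // ler1n.
have D_gt0 : 0 < 2 ^+ h - 1 :> R.
  rewrite subr_gt0 -[X in X < _](expr0 (2 : R)) ltr_eXn2l ?ltr1n //.
  exact: leq_trans C_gt0 le_Ch.
rewrite overlap_gapE // ler_pdivrMr //.
apply: le_trans (ler_wpM2l _ (subset_weight_le _ _)) _; first by rewrite subr_ge0.
rewrite mulrA (mulrC (p ^+ _)) [X in _ <= X]mulrAC ler_wpM2r ?exprn_ge0 //.
apply: ler_pM; rewrite ?subr_ge0 ?two_pow_ge1 //.
- by rewrite lerB // -[X in _ <= X]expr1 ler_wiXn2l.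
- by rewrite lerB // ler_eXn2l ?ltr1n.
Qed.

End SubsetWeight.

Section SubgraphCopies.
Variables (R : realFieldType) (h N : nat) (eH : rel 'I_h) (eG : rel 'I_N).
Local Notation copy := {ffun 'I_h -> 'I_N}.

Definition copy_coef (s : copy) : R := (autH eH)%:R^-1 * M_H R eH eG s.

Definition copy_image (s : copy) : {set 'I_N} := [set s i | i : 'I_h].

Lemma copy_coef_ge0 (s : copy) : 0 <= copy_coef s.
Proof.
rewrite mulr_ge0 ?invr_ge0 ?ler0n //.
by apply: prodr_ge0 => i _; apply: prodr_ge0 => j _; apply: ler0n.
Qed.

Lemma card_copy_image (s : copy) : injectiveb s -> #|copy_image s| = h.
Proof. by move=> /injectiveP inj_s; rewrite card_imset // card_ord. Qed.

Lemma card_copy_imageI (s s' : copy) : injectiveb s ->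
  (#|copy_image s :&: copy_image s'| <= h)%N.
Proof.
by move=> inj_s; rewrite -(card_copy_image inj_s) subset_leq_card ?subsetIl.
Qed.

Lemma T_HGE x : T_HG R eH eG x =
  \sum_(s : copy | injectiveb s) copy_coef s * all_selected R (copy_image s) x.
Proof.
rewrite /T_HG mulr_sumr; apply: eq_bigr => s /injectiveP inj_s.
by rewrite mulrA all_selectedE big_imset // => i j _ _ /inj_s.
Qed.

Lemma t_HE A : t_H R eH eG A =
  \sum_(s : copy | injectiveb s) copy_coef s * (A \subset copy_image s)%:R.
Proof.
rewrite /t_H big_mkcondr mulr_sumr; apply: eq_bigr => s _ /=.
by case: (A \subset _); rewrite ?mulr1 ?mulr0.
Qed.

Lemma variance_T_HG p : variance p (T_HG R eH eG) =
  \sum_(s : copy | injectiveb s) \sum_(s' : copy | injectiveb s')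
    copy_coef s * copy_coef s' *
    (p ^+ (2 * h - #|copy_image s :&: copy_image s'|) - p ^+ h * p ^+ h).
Proof.
rewrite (eq_variance _ T_HGE) variance_all_selected_sum.
apply: eq_bigr => s inj_s; apply: eq_bigr => s' inj_s'.
by rewrite cardsU !card_copy_image // addnn mul2n.
Qed.

Lemma beta_HE p : beta_H eH eG p =
  \sum_(s : copy | injectiveb s) \sum_(s' : copy | injectiveb s')
    copy_coef s * copy_coef s' *
    subset_weight p (2 * h) (copy_image s :&: copy_image s').
Proof.
have t_H_sqr A : t_H R eH eG A ^+ 2 =
    \sum_(s : copy | injectiveb s) \sum_(s' : copy | injectiveb s')
      copy_coef s * copy_coef s' * (A \subset copy_image s :&: copy_image s')%:R.
  rewrite t_HE expr2 big_distrlr; apply: eq_bigr => s _; apply: eq_bigr => s' _.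
  by rewrite /= mulrACA -natrM mulnb subsetI.
transitivity (\sum_(1 <= K < h.+1) \sum_(A : {set 'I_N} | #|A| == K)
    \sum_(s : copy | injectiveb s) \sum_(s' : copy | injectiveb s')
      copy_coef s * copy_coef s' *
      (p ^+ (2 * h - #|A|) * (A \subset copy_image s :&: copy_image s')%:R)).
  apply: eq_bigr => K _; rewrite mulr_sumr; apply: eq_bigr => A /eqP <-.
  rewrite t_H_sqr mulr_sumr; apply: eq_bigr => s _; rewrite mulr_sumr.
  by apply: eq_bigr => s' _; rewrite mulrCA.
under eq_bigr => K _ do rewrite exchange_big.
under eq_bigr => K _ do under eq_bigr => s _ do rewrite exchange_big.
rewrite exchange_big; under eq_bigr => s _ do rewrite exchange_big.
apply: eq_bigr => s inj_s; apply: eq_bigr => s' _.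
rewrite /subset_weight -(sum_card_range_subset _ (card_copy_imageI s' inj_s)).
rewrite mulr_sumr; apply: eq_bigr => K _; rewrite mulr_sumr big_mkcondr.
by apply: eq_bigr => A _; case: (_ \subset _); rewrite ?mulr1 ?mulr0.
Qed.

End SubgraphCopies.

Theorem lemma5p1 (R : realFieldType) (h N : nat) (eH : rel 'I_h) (eG : rel 'I_N)
  (p : R) :
  simple_graph eH -> connected_graph eH -> simple_graph eG ->
  0 < p < 1 ->
  (1 - p) * beta_H eH eG p / (2 ^+ h - 1) <= variance p (T_HG R eH eG)
  /\ variance p (T_HG R eH eG) <= beta_H eH eG p.
Proof.
move=> _ _ _ /andP[/ltW p_ge0 /ltW p_le1].
have coef_ge0 (s s' : {ffun 'I_h -> 'I_N}) :
    0 <= copy_coef R eH eG s * copy_coef R eH eG s'.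
  by rewrite mulr_ge0 ?copy_coef_ge0.
rewrite variance_T_HG beta_HE; split.
- rewrite mulr_sumr mulr_suml; apply: ler_sum => s inj_s.
  rewrite mulr_sumr mulr_suml; apply: ler_sum => s' _.
  rewrite mulrCA -[X in X <= _]mulrA ler_wpM2l //.
  exact: subset_weight_le_overlap_gap (card_copy_imageI s' inj_s).
- apply: ler_sum => s inj_s; apply: ler_sum => s' _; rewrite ler_wpM2l //.
  exact: overlap_gap_le_subset_weight (card_copy_imageI s' inj_s).
Qed.
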